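(* Let $G$ be a finite group, and let $f:G \to \{\pm 1\}$ be a function with $\mathbb{E}_{x \in G} f(x) = 0$. Then \[ \Pr_{x,y}\,[f(x)f(y) = f(xy)] \le \frac{1}{2}\left(1 + \frac{1}{\sqrt{d}}\right), \] where $x,y$ are chosen uniformly and independently from $G$, and $d = \min_{\rho \ne 1} d_\rho$ is the minimum dimension of a nontrivial irreducible (complex) representation $\rho$ of $G$.
   Context: $d_\rho$ denotes the dimension of the representation $\rho$; the minimum is over nontrivial irreducible complex representations of $G$. $\mathbb{E}$ denotes the average over the uniform distribution on $G$. *)

From HB Require Import structures.
From mathcomp Require Import all_boot all_order all_algebra all_fingroup all_solvable all_field all_character.
Set Implicit Arguments. Unset Strict Implicit. Unset Printing Implicit Defensive.
Import Order.TTheory GRing.Theory Num.Theory.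
Local Open Scope ring_scope.

(* d is the minimum degree chi(1) of a nontrivial irreducible complex
   character of G (index 0 of irr G is the principal character). *)
Definition is_min_nontrivial_degree (gT : finGroupType) (G : {group gT}) (d : algC) : Prop :=
  (exists2 i : Iirr G, i != 0 & d = 'chi_i 1%g) /\
  (forall i : Iirr G, i != 0 -> d <= 'chi_i 1%g).

Definition mult_prob (gT : finGroupType) (G : {group gT}) (f : gT -> algC) : algC :=
  #|[set p in setX G G | f p.1 * f p.2 == f (p.1 * p.2)%g]|%:R / (#|G|%:R ^+ 2).

From mathcomp Require Import all_boot all_order all_algebra all_fingroup all_solvable all_field all_character.
From mathcomp Require Import ring.
Set Implicit Arguments. Unset Strict Implicit. Unset Printing Implicit Defensive.
Import Order.TTheory GRing.Theory Num.Theory.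
Local Open Scope ring_scope.
Local Open Scope sesquilinear_scope.

(* Since f takes values +-1, Pr[f x f y = f (x y)] = (1 + S / |G|^2) / 2 with
   S = \sum_(x, y) f x f y f (x y).  Let M be the matrix of convolution by f
   on the regular representation, M_(x, z) = f (z x^-1), and F the row vector
   of values of f, so that S = F M F^*.  The Hermitian matrix M M^* commutes
   with the regular representation, so its eigenspaces are G-modules.  Since f
   has mean zero, constant vectors lie in the kernel of M, hence an eigenspace
   for a nonzero eigenvalue has no nonzero G-fixed vector and thus dimension at
   least d.  The trace of M M^* being |G|^2, every eigenvalue is at most
   |G|^2 / d, and Cauchy-Schwarz yields S^2 <= |F M|^2 |F|^2 <= |G|^4 / d. *)

Section NormalSpectrum.
Variables (n : nat) (N : 'M[algC]_n).
Hypothesis normalN : N \is normalmx.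
Let P := spectralmx N.
Let D := spectral_diag N.
Let unitaryP : P \is unitarymx. Proof. exact: spectral_unitarymx. Qed.

Lemma spectral_trmxC_mul : P^t* *m P = 1%:M.
Proof. by move: unitaryP; rewrite -trmxC_unitary => /unitarymxP; rewrite trmxCK. Qed.

Lemma spectralE : N = P^t* *m diag_mx D *m P.
Proof. by rewrite -invmx_unitary //; apply/orthomx_spectralP. Qed.

Lemma spectral_mulmx : P *m N = diag_mx D *m P.
Proof. by rewrite spectralE !mulmxA (unitarymxP unitaryP) mul1mx. Qed.

Lemma row_spectral_eigen k : row k P *m N = D 0 k *: row k P.
Proof. by rewrite -row_mul spectral_mulmx row_mul row_diag_mx -scalemxAl -rowE. Qed.

Lemma sum_spectral_diag : \sum_k D 0 k = \tr N.
Proof.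
by rewrite spectralE mxtrace_mulC mulmxA (unitarymxP unitaryP) mul1mx mxtrace_diag.
Qed.

Lemma eigenvalue_spectral_diag k : eigenvalue N (D 0 k).
Proof.
apply/eigenvalueP; exists (row k P); first exact: row_spectral_eigen.
apply/eqP => Pk0; have /row_unitarymxP/(_ k k) := unitaryP.
by rewrite Pk0 eqxx linear0l => /eqP; rewrite eq_sym oner_eq0.
Qed.

(* The eigenspace for a is spanned by the rows of P along which D equals a. *)
Lemma mxrank_eigenspace_le a :
  (\rank (eigenspace N a) <= #|[set k | D 0%R k == a]|)%N.
Proof.
set S := [set k | D 0 k == a].
pose E := rowsub (enum_val : 'I_#|S| -> _) P.
suff sNE : (eigenspace N a <= E)%MS.
  exact: leq_trans (mxrankS sNE) (rank_leq_row _).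
apply/rV_subP => v /eigenspaceP vN; set c := v *m P^t*.
have vE : v = c *m P by rewrite /c -mulmxA spectral_trmxC_mul mulmx1.
have cD : c *m diag_mx D = a *: c.
  apply: (can_inj (mulmxK (unitarymx_unit unitaryP))).
  by rewrite -mulmxA -spectral_mulmx mulmxA -vE vN vE scalemxAl.
rewrite vE mulmx_sum_row; apply: summx_sub => k _.
have [kS | kNS] := boolP (k \in S).
  by apply/scalemx_sub; rewrite -(enum_rankK_in kS kS) -row_rowsub row_sub.
have /rowP/(_ k) := cD; rewrite mul_mx_diag !mxE => /eqP.
rewrite mulrC -subr_eq0 -mulrBl mulf_eq0 subr_eq0 inE in kNS *.
by rewrite (negPf kNS) => /eqP ->; rewrite scale0r sub0mx.
Qed.

End NormalSpectrum.

Section GramSpectrum.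
Variables (n : nat) (A : 'M[algC]_n).
Let H := A *m A^t*.
Let D := spectral_diag H.

Lemma gram_normalmx : H \is normalmx.
Proof.
have Hherm : H^t* = H by rewrite /H trmx_mul map_mxM trmxCK.
by apply/normalmxP; rewrite Hherm.
Qed.

Lemma dotmx_mulmx u : dotmx (u *m A) (u *m A) = (u *m H *m u^t*) 0 0.
Proof. by rewrite dotmxE /H trmx_mul map_mxM !mulmxA. Qed.

Lemma gram_spectral_diag_ge0 k : 0 <= D 0 k.
Proof.
have : 0 <= dotmx (row k (spectralmx H) *m A) (row k (spectralmx H) *m A).
  exact: dnorm_ge0.
rewrite dotmx_mulmx row_spectral_eigen ?gram_normalmx // -scalemxAl mxE -dotmxE.
by have /row_unitarymxP-> := spectral_unitarymx H; rewrite eqxx mulr1.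
Qed.

Lemma dotmx_mulmx_le B : (forall k, D 0 k <= B) ->
  forall u, dotmx (u *m A) (u *m A) <= B * dotmx u u.
Proof.
move=> D_le u; set P := spectralmx H; set c := u *m P^t*.
have -> : dotmx u u = dotmx c c.
  rewrite !dotmxE trmx_mul map_mxM trmxCK !mulmxA -(mulmxA u).
  by rewrite spectral_trmxC_mul ?gram_normalmx ?mulmx1.
rewrite dotmx_mulmx (spectralE gram_normalmx) -/P dotmxE.
have -> : u *m (P^t* *m diag_mx D *m P) *m u^t* = c *m diag_mx D *m c^t*.
  by rewrite trmx_mul map_mxM trmxCK !mulmxA.
rewrite mul_mx_diag !mxE mulr_sumr; apply: ler_sum => k _.
by rewrite !mxE mulrAC [B * _]mulrC ler_wpM2l ?mul_conjC_ge0.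
Qed.

Lemma card_spectral_diag_mul_le a : #|[set k | D 0 k == a]|%:R * a <= \tr H.
Proof.
rewrite -sum_spectral_diag ?gram_normalmx //.
rewrite (bigID (mem [set k | D 0 k == a])) /= -[leLHS]addr0.
rewrite lerD ?sumr_ge0 // => [|k _]; last exact: gram_spectral_diag_ge0.
rewrite -sum1_card natr_sum mulr_suml [leRHS](eq_bigr (fun _ => 1 * a)) //.
by move=> k; rewrite inE => /eqP ->; rewrite mul1r.
Qed.

Lemma gram_mxtrace_ge0 : 0 <= \tr H.
Proof.
by rewrite -sum_spectral_diag ?gram_normalmx // sumr_ge0 // => k _; apply: gram_spectral_diag_ge0.
Qed.

(* Each nonzero eigenvalue is counted at least d times in the trace. *)
Lemma gram_spectral_diag_le (d : algC) : 0 < d ->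
  (forall a, a != 0 -> eigenvalue H a -> d <= (\rank (eigenspace H a))%:R) ->
  forall k, D 0 k <= \tr H / d.
Proof.
move=> d_gt0 rank_ge k; rewrite ler_pdivlMr //.
have [->|Dk_neq0] := eqVneq (D 0 k) 0; first by rewrite mul0r gram_mxtrace_ge0.
have Dk_ge0 := gram_spectral_diag_ge0 k.
apply: le_trans (card_spectral_diag_mul_le (D 0 k)).
rewrite mulrC ler_wpM2r //; apply: le_trans (rank_ge _ Dk_neq0 _) _.
  exact/eigenvalue_spectral_diag/gram_normalmx.
by rewrite ler_nat mxrank_eigenspace_le ?gram_normalmx.
Qed.

End GramSpectrum.

Lemma min_nontrivial_degree_gt0 (gT : finGroupType) (G : {group gT}) d :
  is_min_nontrivial_degree G d -> 0 < d.
Proof. by case=> -[i _ ->] _; apply: irr1_gt0. Qed.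

Section RepresentationDegree.
Variables (gT : finGroupType) (G : {group gT}) (n : nat).
Variable rG : mx_representation algC G n.

Lemma mxmodule_eigenspace (B : 'M[algC]_n) a :
  centgmx rG B -> mxmodule rG (eigenspace B a).
Proof.
move=> /centgmxP cB; apply: kermx_centg_module; apply/centgmxP => x Gx.
by rewrite mulmxBl mulmxBr cB // scalar_mxC.
Qed.

(* A simple submodule of U affords an irreducible character; it cannot be
   the principal one, which would make the submodule pointwise fixed. *)
Lemma min_nontrivial_degree_le_rank d (U : 'M_n) : is_min_nontrivial_degree G d ->
  mxmodule rG U -> U != 0 -> (U :&: rfix_mx rG G)%MS = 0 -> d <= (\rank U)%:R.
Proof.
move=> [_ d_min] modU nzU Ufix0.
apply: (mxsimple_exists modU nzU) => -[V simV sVU].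
have modV := mxsimple_module simV.
have irrV : mx_irreducible (submod_repr modV) by apply/submod_mx_irr.
have /irrP[i chiE] : cfRepr (submod_repr modV) \in irr G.
  by apply/irr_reprP; exists (Representation (submod_repr modV)).
have [i0 | nz_i] := eqVneq i 0; last first.
  by apply: le_trans (d_min i nz_i) _; rewrite -chiE cfRepr1 ler_nat mxrankS.
have sVfix : (V <= rfix_mx rG G)%MS.
  rewrite -val_submod1; apply/rfix_mxP => x Gx; rewrite -val_submodJ //.
  have /rkerP[_ ->] : x \in rker (submod_repr modV).
    by rewrite -cfker_repr chiE i0 irr0 cfker_cfun1.
  by rewrite mul1mx.
have [_ nzV _] := simV; case/eqP: nzV.
by apply/eqP; rewrite -submx0 -Ufix0 sub_capmx sVU.
Qed.

End RepresentationDegree.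

Section RegularConvolution.
Variables (gT : finGroupType) (G : {group gT}).
Local Notation aG := (regular_repr algC G).

Definition rV_of_fun (f : gT -> algC) : 'rV[algC]_#|G| := \row_j f (enum_val j).

Definition conv_mx (f : gT -> algC) : 'M[algC]_#|G| :=
  \matrix_(i, j) f (enum_val j * (enum_val i)^-1)%g.

Lemma regular_mxE x i k : aG x i k = (k == gring_index G (enum_val i * x)%g)%:R.
Proof. by rewrite /= /regular_mx !mxE. Qed.

Lemma regular_mulmxE m (B : 'M_(#|G|, m)) x i j :
  (aG x *m B) i j = B (gring_index G (enum_val i * x)%g) j.
Proof.
rewrite mxE (bigD1 (gring_index G (enum_val i * x)%g)) //= big1 => [|k /negbTE nk].
  by rewrite regular_mxE eqxx mul1r addr0.
by rewrite regular_mxE nk mul0r.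
Qed.

Lemma mulmx_regularE m (B : 'M_(m, #|G|)) x i j : x \in G ->
  (B *m aG x) i j = B i (gring_index G (enum_val j * x^-1)%g).
Proof.
move=> Gx; rewrite mxE (bigD1 (gring_index G (enum_val j * x^-1)%g)) //= big1 => [|k nk].
  rewrite regular_mxE gring_indexK ?groupM ?groupV ?enum_valP // mulgKV gring_valK.
  by rewrite eqxx mulr1 addr0.
rewrite regular_mxE; case: eqP => [Ejk|]; last by rewrite mulr0.
by case/eqP: nk; rewrite Ejk gring_indexK ?groupM ?enum_valP // mulgK gring_valK.
Qed.

Lemma centgmx_conv_mx f : centgmx aG (conv_mx f).
Proof.
apply/centgmxP => x Gx; apply/matrixP => i j.
rewrite mulmx_regularE // regular_mulmxE !mxE !gring_indexK ?groupM ?groupV ?enum_valP //.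
by rewrite invMg mulgA.
Qed.

Lemma conv_mx_trC f : (conv_mx f)^t* = conv_mx (fun z => (f z^-1)^*)%g.
Proof. by apply/matrixP => i j; rewrite !mxE invMg invgK. Qed.

Lemma centgmx_conv_gram f : centgmx aG (conv_mx f *m (conv_mx f)^t*).
Proof.
apply/centgmxP => x Gx; rewrite conv_mx_trC -mulmxA (centgmxP (centgmx_conv_mx _)) //.
by rewrite mulmxA (centgmxP (centgmx_conv_mx f)) // -mulmxA.
Qed.

Lemma regular_fixed_const (w : 'rV[algC]_#|G|) :
  (forall x, x \in G -> w *m aG x = w) -> w = w 0 (gring_index G 1) *: const_mx 1.
Proof.
move=> fix_w; apply/rowP => j; rewrite !mxE mulr1.
by rewrite -{1}(fix_w _ (enum_valP j)) mulmx_regularE ?enum_valP // mulgV.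
Qed.

Lemma sum_mulgV (F : gT -> algC) y : y \in G ->
  \sum_(x in G) F (y * x^-1)%g = \sum_(x in G) F x.
Proof.
move=> Gy; rewrite (reindex_acts 'R _ Gy) ?astabsR //=.
under eq_bigr do rewrite invMg mulgA mulgV mul1g.
by rewrite [RHS](reindex_inj invg_inj) /=; apply: eq_bigl => x; rewrite groupV.
Qed.

Lemma const_mx_conv f :
  (const_mx 1 : 'rV_#|G|) *m conv_mx f = (\sum_(x in G) f x) *: const_mx 1.
Proof.
apply/rowP => j; rewrite !mxE mulr1 -(sum_mulgV _ (enum_valP j)) [RHS]big_enum_val.
by apply: eq_bigr => i _; rewrite !mxE mul1r.
Qed.

Lemma mxtrace_conv_gram f :
  \tr (conv_mx f *m (conv_mx f)^t*) = #|G|%:R * \sum_(x in G) `|f x| ^+ 2.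
Proof.
rewrite mxtrace_mulC /mxtrace (eq_bigr (fun _ => \sum_(x in G) `|f x| ^+ 2)).
  by rewrite sumr_const card_ord mulr_natl.
move=> i _; rewrite -(sum_mulgV _ (enum_valP i)) big_enum_val mxE.
by apply: eq_bigr => j _; rewrite !mxE normCK mulrC.
Qed.

Lemma dotmx_rV_of_fun f :
  dotmx (rV_of_fun f) (rV_of_fun f) = \sum_(x in G) `|f x| ^+ 2.
Proof.
by rewrite dotmxE mxE [RHS]big_enum_val; apply: eq_bigr => j _; rewrite !mxE normCK.
Qed.

Lemma dotmx_conv g f h : dotmx (rV_of_fun g *m conv_mx f) (rV_of_fun h) =
  \sum_(x in G) \sum_(y in G) f x * g y * (h (x * y)%g)^*.
Proof.
rewrite dotmxE mxE (eq_bigr (fun j => \sum_(i < #|G|) g (enum_val i) *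
    f (enum_val j * (enum_val i)^-1)%g * (h (enum_val j))^*)) => [|j _]; last first.
  by rewrite !mxE mulr_suml; apply: eq_bigr => i _; rewrite !mxE.
rewrite exchange_big [RHS]exchange_big [RHS]big_enum_val; apply: eq_bigr => i _.
rewrite -(big_enum_val (fun z => g (enum_val i) * f (z * (enum_val i)^-1)%g * (h z)^*)).
rewrite (reindex_acts 'R _ (enum_valP i)) ?astabsR //=.
by apply: eq_bigr => x _; rewrite mulgK [f x * _]mulrC.
Qed.

End RegularConvolution.

Lemma sign_eq_indicator (a b : algC) : a ^+ 2 = 1 -> b ^+ 2 = 1 ->
  (a == b)%:R = (1 + a * b) / 2.
Proof.
have N1_neq1 : (-1 == 1 :> algC) = false.
  by rewrite -subr_eq0 -opprD -(natrD _ 1 1) oppr_eq0 pnatr_eq0.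
have two_neq0 : (2 : algC) != 0 by rewrite pnatr_eq0.
move=> /eqP; rewrite sqrf_eq1 => /orP[] /eqP-> /eqP; rewrite sqrf_eq1 => /orP[] /eqP->;
  by rewrite ?eqxx ?(eq_sym 1) ?N1_neq1 ?mulrNN ?mulr1 ?mul1r ?subrr ?mul0r ?divff.
Qed.

Section SignFunction.
Variables (gT : finGroupType) (G : {group gT}) (f : gT -> algC).
Hypothesis f_sign : {in G, forall x, f x ^+ 2 = 1}.
Local Notation M := (conv_mx G f).
Local Notation F := (rV_of_fun G f).
Local Notation S := (\sum_(x in G) \sum_(y in G) f x * f y * f (x * y)%g).

Lemma card_mult_agree :
  #|[set p in setX G G | f p.1 * f p.2 == f (p.1 * p.2)%g]|%:R = (#|G|%:R ^+ 2 + S) / 2.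
Proof.
rewrite -sum1dep_card natr_sum big_mkcondr.
rewrite (eq_bigl (fun p => (p.1 \in G) && (p.2 \in G))) => [|[x y]]; last exact: in_setX.
rewrite -(pair_big (mem G) (mem G) (fun x y => if f x * f y == f (x * y)%g then 1 else 0)).
transitivity (\sum_(x in G) (\sum_(y in G) (1 + f x * f y * f (x * y)%g)) / 2).
  apply: eq_bigr => x Gx; rewrite mulr_suml; apply: eq_bigr => y Gy.
  by rewrite -sign_eq_indicator ?exprMn ?f_sign ?groupM ?mulr1 //; case: (_ == _).
rewrite -mulr_suml; congr (_ / 2).
under eq_bigr do rewrite big_split /= sumr_const.
by rewrite big_split /= sumr_const expr2 mulr_natr.
Qed.

Lemma mult_probE : mult_prob G f = (1 + S / #|G|%:R ^+ 2) / 2.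
Proof.
rewrite /mult_prob card_mult_agree; field.
by rewrite pnatr_eq0 -lt0n cardG_gt0.
Qed.

Lemma sum_norm_sign : \sum_(x in G) `|f x| ^+ 2 = #|G|%:R.
Proof.
by rewrite (eq_bigr (fun _ => 1)) ?sumr_const // => x Gx; rewrite -normrX f_sign ?normr1.
Qed.

Lemma conj_sign x : x \in G -> (f x)^* = f x.
Proof. by move/f_sign/eqP; rewrite sqrf_eq1 => /orP[]/eqP->; rewrite ?rmorphN rmorph1. Qed.

Lemma sum_sign_triple_real : S \is Num.real.
Proof.
have f_real x : x \in G -> f x \is Num.real by move=> Gx; apply/CrealP/conj_sign.
by apply: rpred_sum => x Gx; apply: rpred_sum => y Gy; rewrite !rpredM ?f_real ?groupM.
Qed.

Lemma sum_sign_tripleE : S = dotmx (F *m M) F.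
Proof.
rewrite dotmx_conv; apply: eq_bigr => x Gx; apply: eq_bigr => y Gy.
by rewrite conj_sign ?groupM.
Qed.

Hypothesis f_balanced : \sum_(x in G) f x = 0.

Lemma eigenspace_conv_gram_rfix a : a != 0 ->
  (eigenspace (M *m M^t*) a :&: rfix_mx (regular_repr algC G) G)%MS = 0.
Proof.
move=> a_neq0; apply/eqP; rewrite -submx0; apply/rV_subP => w.
rewrite sub_capmx submx0 => /andP[/eigenspaceP wH /rfix_mxP/regular_fixed_const wE].
move: wH; rewrite wE -scalemxAl mulmxA const_mx_conv f_balanced scale0r mul0mx scaler0.
by move/esym/eqP; rewrite -wE scaler_eq0 (negPf a_neq0).
Qed.

Lemma min_degree_le_rank_eigenspace_conv_gram d a : is_min_nontrivial_degree G d ->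
  a != 0 -> eigenvalue (M *m M^t*) a -> d <= (\rank (eigenspace (M *m M^t*) a))%:R.
Proof.
move=> d_min a_neq0 ev_a; apply: min_nontrivial_degree_le_rank d_min _ ev_a _.
  exact/mxmodule_eigenspace/centgmx_conv_gram.
exact: eigenspace_conv_gram_rfix.
Qed.

Lemma sum_sign_triple_le d : is_min_nontrivial_degree G d -> S <= #|G|%:R ^+ 2 / sqrtC d.
Proof.
move=> d_min; have d_gt0 := min_nontrivial_degree_gt0 d_min.
apply: le_trans (real_ler_norm sum_sign_triple_real) _.
rewrite -ler_sqr ?nnegrE ?divr_ge0 ?sqrtC_ge0 ?exprn_ge0 ?(ltW d_gt0) //.
rewrite expr_div_n sqrtCK sum_sign_tripleE.
have CS : `|dotmx (F *m M) F| ^+ 2 <= dotmx (F *m M) (F *m M) * dotmx F F.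
  exact: (CauchySchwarz (@dotmx algC #|G|) (F *m M) F).1.
have rank_ge := min_degree_le_rank_eigenspace_conv_gram d_min.
have := dotmx_mulmx_le (gram_spectral_diag_le d_gt0 rank_ge) F.
rewrite mxtrace_conv_gram dotmx_rV_of_fun sum_norm_sign => FM_le.
apply: le_trans CS _; rewrite dotmx_rV_of_fun sum_norm_sign.
apply: le_trans (ler_wpM2r (ler0n _ _) FM_le) _.
rewrite [leRHS](_ : _ = #|G|%:R * #|G|%:R / d * #|G|%:R * #|G|%:R) //.
by field; rewrite gt_eqF.
Qed.

End SignFunction.

Theorem theorem1 (gT : finGroupType) (G : {group gT}) (f : gT -> algC) (d : algC) :
  {in G, forall x, f x = 1 \/ f x = -1} ->
  (#|G|%:R)^-1 * \sum_(x in G) f x = 0 ->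
  is_min_nontrivial_degree G d ->
  mult_prob G f <= (1 + (sqrtC d)^-1) / 2.
Proof.
move=> f_pm f_mean d_min.
have f_sign : {in G, forall x, f x ^+ 2 = 1}.
  by move=> x /f_pm[] ->; rewrite ?sqrrN expr1n.
have nG_gt0 : 0 < #|G|%:R :> algC by rewrite ltr0n cardG_gt0.
have f_balanced : \sum_(x in G) f x = 0.
  by move/eqP: f_mean; rewrite mulf_eq0 invr_eq0 gt_eqF //= => /eqP.
rewrite mult_probE // ler_pM2r ?invr_gt0 ?ltr0n // lerD2l ler_pdivrMr ?exprn_gt0 //.
by rewrite mulrC sum_sign_triple_le.
Qed.
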